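(* Let $G=(V,E)$ be a simple undirected connected graph modeling a radio network, and let $F$ be a finite set of tours in $G$, each of which consists of a single link (i.e., each packet must be forwarded exactly once, from the tail to the head of its link), with all packets available at their source nodes from the start. Then the minimum number of rounds of a transmission schedule that delivers every packet of $F$ to its destination equals the chromatic number of the conflict graph of $F$.
   Context: Radio network model: a network is a simple undirected connected graph $G=(V,E)$; an oriented edge $(u,v)$ is a link $u\rightarrow v$ with tail $u$ and head $v$. Computation proceeds in synchronous rounds; in each round each node either transmits a message or listens. A node $v$ hears a message from its neighbor $u$ in round $t$ iff $v$ listens in round $t$ and $u$ is the only neighbor of $v$ transmitting in round $t$. A tour consists of a packet, its injection round, and a simple oriented path $\langle v_1,\dots,v_k\rangle$ it must traverse; its links are $v_i\rightarrow v_{i+1}$, its source is $v_1$ and its destination is $v_k$. The packet is routed along the tour when there are rounds $t_1<\dots<t_{k-1}$ (not earlier than the injection round) such that $v_i$ transmits the packet in round $t_i$ and $v_{i+1}$ hears it in round $t_i$. Conflicts: a node $w$ conflicts with a link $u\rightarrow v$ if $w=u$, or $w=v$, or $w$ and $v$ are neighbors; a node conflicts with a tour if it conflicts with some link of the tour. Two tours $f_0,f_1$ conflict if either they pass through a common node, or some node of one tour $f_i$ other than $f_i$'s destination conflicts with the other tour $f_{1-i}$. The conflict graph of a set $F$ of tours is the simple graph whose vertices are the tours in $F$, two distinct tours being adjacent iff they conflict. The chromatic number of a graph is the minimum number of colors in a proper vertex coloring. *)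

From mathcomp Require Import all_boot.
Set Implicit Arguments. Unset Strict Implicit. Unset Printing Implicit Defensive.

Definition simple_graph (T : finType) (e : rel T) : Prop :=
  symmetric e /\ irreflexive e.
Definition connected_graph (T : finType) (e : rel T) : Prop :=
  forall x y : T, connect e x y.

(* The simple graph with vertex set T in which distinct x, y are adjacent iff r x y. *)
Definition colorable (T : finType) (r : rel T) (k : nat) : bool :=
  [exists f : {ffun T -> 'I_k},
     [forall x, forall y, ((x != y) && r x y) ==> (f x != f y)]].

Lemma colorable_exists (T : finType) (r : rel T) : exists k, colorable r k.
Proof.
exists #|T|; apply/existsP; exists [ffun x => enum_rank x].
apply/forallP=> x; apply/forallP=> y; apply/implyP=> /andP[nxy _].
by rewrite !ffunE; apply: contra nxy => /eqP /enum_rank_inj ->.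
Qed.

Definition chromatic_number (T : finType) (r : rel T) : nat :=
  ex_minn (colorable_exists r).

Definition is_tour (T : finType) (e : rel T) (p : seq T) : bool :=
  match p with
  | [::] => false
  | x :: q => [&& q != [::], path e x q & uniq p]
  end.

Definition links (T : Type) (p : seq T) : seq (T * T) := zip p (behead p).

Definition destination (T : finType) (p : seq T) : option T :=
  if p is x :: q then Some (last x q) else None.

Definition conflicts_link (T : finType) (e : rel T) (w : T) (l : T * T) : bool :=
  [|| w == l.1, w == l.2 | e w l.2].

Definition conflicts_tour (T : finType) (e : rel T) (w : T) (p : seq T) : bool :=
  has (conflicts_link e w) (links p).

Definition conflicts_from (T : finType) (e : rel T) (p0 p1 : seq T) : bool :=
  has (fun w => (Some w != destination p0) && conflicts_tour e w p1) p0.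

Definition tours_conflict (T : finType) (e : rel T) (p0 p1 : seq T) : bool :=
  [|| has (mem p1) p0, conflicts_from e p0 p1 | conflicts_from e p1 p0].

(* conflict relation on a finite family of tours indexed by I
   (the conflict graph is the simple graph of chromatic_number, i.e.
    distinct tours are adjacent iff they conflict) *)
Definition conflict (T : finType) (e : rel T) (I : finType) (tour : I -> seq T)
  : rel I := fun i j => tours_conflict e (tour i) (tour j).

(* A schedule: in round t, node w transmits packet i (act t w = Some i)
   or listens (act t w = None).  The packet of tour i is identified with i. *)
Definition schedule (T I : finType) := nat -> T -> option I.

Definition hears (T I : finType) (e : rel T) (act : schedule T I)
  (t : nat) (u v : T) : Prop :=
  act t v = None /\ e u v /\ act t u <> None /\
  (forall w, e w v -> act t w <> None -> w = u).

(* node w holds packet i at (the start of) round t: w is the source of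
   tour i (all packets are injected in round 0), or w heard i earlier *)
Definition holds (T I : finType) (e : rel T) (tour : I -> seq T)
  (act : schedule T I) (t : nat) (w : T) (i : I) : Prop :=
  head w (tour i) = w /\ tour i != [::] \/
  exists t' u, t' < t /\ act t' u = Some i /\ hears e act t' u w.

Definition valid_schedule (T I : finType) (e : rel T) (tour : I -> seq T)
  (act : schedule T I) : Prop :=
  forall t w i, act t w = Some i -> holds e tour act t w i.

Definition routed_within (T I : finType) (e : rel T) (act : schedule T I)
  (i : I) (p : seq T) (k : nat) : Prop :=
  exists ts : seq nat,
    [/\ size ts = size (links p), sorted ltn ts, all (fun t => t < k) ts &
      forall (t : nat) (l : T * T), (t, l) \in zip ts (links p) ->
        act t l.1 = Some i /\ hears e act t l.1 l.2].

Definition delivers_all_within (T I : finType) (e : rel T) (tour : I -> seq T)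
  (k : nat) : Prop :=
  exists act : schedule T I,
    valid_schedule e tour act /\ forall i : I, routed_within e act i (tour i) k.

Definition is_minimum (P : nat -> Prop) (m : nat) : Prop :=
  P m /\ forall k, P k -> m <= k.

From mathcomp Require Import all_boot.

Set Implicit Arguments.
Unset Strict Implicit.
Unset Printing Implicit Defensive.

(* When every tour is a single link, a packet is delivered by one transmission
   and the nodes never forward anything.  Two single-link tours can then be
   served in the same round exactly when they do not conflict: a shared node,
   or a transmitter adjacent to the other receiver, makes one of the two
   receptions fail, and conversely if no such interference exists, all
   transmissions of a round are heard.  Hence the rounds of a schedule form a
   proper colouring of the conflict graph, and a proper colouring, read as
   "transmit packet i in round colour(i)", is a schedule. *)

Lemma tour_single_link (T : finType) (e : rel T) (p : seq T) :
  is_tour e p -> size p = 2 -> exists a b, [/\ p = [:: a; b], e a b & a != b].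
Proof.
case: p => [|a [|b [|c p]]] //=; rewrite inE !andbT => /andP[eab nab] _.
by exists a, b.
Qed.

Lemma tours_conflict_single (T : finType) (e : rel T) (a b c d : T) :
  a != b -> c != d ->
  tours_conflict e [:: a; b] [:: c; d] =
  [|| a == c, a == d, b == c, b == d, e a d | e c b].
Proof.
move=> nab ncd.
rewrite /tours_conflict /conflicts_from /conflicts_tour /links /destination /=.
rewrite !inE !eqxx /= !(inj_eq Some_inj) nab ncd /conflicts_link /= !orbF.
rewrite (eq_sym c a) (eq_sym c b).
by case: (a == c); case: (a == d); case: (b == c); case: (b == d); rewrite ?orbT.
Qed.

Lemma routed_single_linkP (T I : finType) (e : rel T) (act : schedule T I)
    (i : I) (a b : T) (k : nat) :
  routed_within e act i [:: a; b] k <->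
  exists2 t, t < k & act t a = Some i /\ hears e act t a b.
Proof.
rewrite /routed_within /links /=; split.
  case=> -[|t [|? ?]] [//= _ _ /andP[tk _] routed].
  by exists t => //; apply: (routed t (a, b)); rewrite inE.
case=> t tk [act_a hears_ab]; exists [:: t]; split => //=; first by rewrite tk.
by move=> t' l; rewrite inE => /eqP[-> ->].
Qed.

Lemma hears_same_round_no_conflict (T I : finType) (e : rel T)
    (act : schedule T I) (t : nat) (a b c d : T) (i j : I) :
  i != j ->
  act t a = Some i -> hears e act t a b ->
  act t c = Some j -> hears e act t c d ->
  ~~ tours_conflict e [:: a; b] [:: c; d].
Proof.
move=> nij act_a [b_listens [eab [_ b_hears_only_a]]].
move=> act_c [d_listens [_ [_ d_hears_only_c]]].
have nab : a != b by apply: contra_eqN act_a => /eqP->; rewrite b_listens.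
have ncd : c != d by apply: contra_eqN act_c => /eqP->; rewrite d_listens.
have nac : a != c.
  by apply: contra_neq nij => ac; move: act_c; rewrite -ac act_a => -[].
rewrite tours_conflict_single // (negPf nac) /=.
apply/negP => /or4P[/eqP ad | /eqP bc | /eqP bd | /orP[ead | ecb]].
- by move: d_listens; rewrite -ad act_a.
- by move: b_listens; rewrite bc act_c.
- by move: nac; rewrite (d_hears_only_c a) ?eqxx ?act_a // -bd.
- by move: nac; rewrite (d_hears_only_c a) ?eqxx ?act_a.
- by move: nac; rewrite (b_hears_only_a c) ?eqxx ?act_c.
Qed.

Section ColorSchedule.

Variables (T I : finType) (e : rel T) (tour : I -> seq T) (color : I -> nat).

Definition color_schedule : schedule T I := fun t w =>
  [pick i | (ohead (tour i) == Some w) && (color i == t)].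

Lemma color_scheduleP t w i :
  color_schedule t w = Some i -> ohead (tour i) = Some w /\ color i = t.
Proof. by rewrite /color_schedule; case: pickP => // j /andP[/eqP ? /eqP ?] [<-]. Qed.

Lemma color_schedule_valid : valid_schedule e tour color_schedule.
Proof.
move=> t w i /color_scheduleP[src _]; left.
by case: (tour i) src => //= v _ [->].
Qed.

Hypothesis color_proper :
  forall i j, i != j -> conflict e tour i j -> color i != color j.

Lemma color_schedule_conflict t w i j :
  color_schedule t w = Some j -> color i = t -> conflict e tour j i -> j = i.
Proof.
move=> /color_scheduleP[_ colj] coli; apply: contraTeq => nji.
by apply/negP => /(color_proper nji); rewrite colj coli eqxx.
Qed.

End ColorSchedule.

Section SingleLinkTours.

Variables (T I : finType) (e : rel T) (tour : I -> seq T).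

Hypothesis single_link :
  forall i, exists a b, [/\ tour i = [:: a; b], e a b & a != b].

Lemma delivers_colorable k :
  delivers_all_within e tour k -> colorable (conflict e tour) k.
Proof.
case=> act [_ routed].
have /fin_all_exists[round round_ok] : forall i, exists t : 'I_k,
    forall a b, tour i = [:: a; b] -> act t a = Some i /\ hears e act t a b.
  move=> i; have [a [b [ti _ _]]] := single_link i.
  have /routed_single_linkP[t tk sent] : routed_within e act i [:: a; b] k.
    by rewrite -ti.
  by exists (Ordinal tk) => a' b'; rewrite ti => -[<- <-].
apply/existsP; exists [ffun i => round i].
apply/forallP => i; apply/forallP => j; apply/implyP => /andP[nij].
have [a [b [ti _ _]]] := single_link i; have [c [d [tj _ _]]] := single_link j.
rewrite !ffunE /conflict ti tj; apply: contraL => /eqP same_round.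
have [act_a hears_ab] := round_ok i a b ti.
have [act_c hears_cd] := round_ok j c d tj.
rewrite same_round in act_a hears_ab.
exact: hears_same_round_no_conflict nij act_a hears_ab act_c hears_cd.
Qed.

Lemma colorable_delivers k :
  colorable (conflict e tour) k -> delivers_all_within e tour k.
Proof.
case/existsP=> f /forallP proper_f.
have color_proper i j :
    i != j -> conflict e tour i j -> val (f i) != val (f j).
  move=> nij cij; rewrite val_eqE.
  by move/forallP/(_ j)/implyP: (proper_f i); apply; rewrite nij.
pose act := color_schedule tour (fun i => val (f i)).
exists act; split; first exact: color_schedule_valid.
move=> i; have [a [b [ti eab nab]]] := single_link i.
have interferer_eq w j :
    act (f i) w = Some j -> [|| w == a, w == b | e w b] -> j = i.
  move=> act_w hit; have [src _] := color_scheduleP act_w.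
  have [c [d [tj _ ncd]]] := single_link j; move: src; rewrite tj => -[cw].
  apply: color_schedule_conflict color_proper _ _ _ _ act_w erefl _.
  rewrite /conflict tj ti tours_conflict_single // cw.
  by case/or3P: hit => ->; rewrite ?orbT.
have sends_own w j : act (f i) w = Some j -> j = i -> w = a.
  by move=> /color_scheduleP[src _] ji; move: src; rewrite ji ti => -[].
have act_a : act (f i) a = Some i.
  case act_a: (act (f i) a) => [j|]; first by rewrite (interferer_eq a j) ?eqxx.
  move: act_a; rewrite /act /color_schedule; case: pickP => // /(_ i).
  by rewrite ti /= !eqxx.
rewrite ti; apply/routed_single_linkP; exists (val (f i)); first exact: ltn_ord.
split; first exact: act_a.
split; [|split; [exact: eab | split; [by rewrite act_a |]]].
- case act_b: (act (f i) b) => [j|] //.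
  have ji : j = i by apply: interferer_eq act_b _; rewrite eqxx orbT.
  by move: nab; rewrite -(sends_own _ _ act_b ji) eqxx.
- move=> w ewb; case act_w: (act (f i) w) => [j|] // _.
  by apply: sends_own act_w (interferer_eq _ _ act_w _); rewrite ewb !orbT.
Qed.

End SingleLinkTours.

Theorem theorem1 (T : finType) (e : rel T)
  (Hsimple : simple_graph e) (Hconn : connected_graph e)
  (I : finType) (tour : I -> seq T)
  (Htour : forall i, is_tour e (tour i))
  (Hsingle : forall i, size (tour i) = 2) :
  is_minimum (delivers_all_within e tour) (chromatic_number (conflict e tour)).
Proof.
have single_link i := tour_single_link (Htour i) (Hsingle i).
rewrite /chromatic_number; case: ex_minnP => m colorable_m minimal_m; split.
  exact: colorable_delivers.
by move=> k /(delivers_colorable single_link); apply: minimal_m.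
Qed.
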